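(* Let $\langle X,d\rangle$ be a metric space. The following are equivalent: (1) $X$ is cofinally Bourbaki quasi-complete; (2) whenever $f:X\to\mathbb{R}$ is a continuous, nowhere-zero function that maps every cofinally Bourbaki quasi-Cauchy sequence in $X$ to a cofinally Bourbaki-Cauchy sequence in $\mathbb{R}$, the reciprocal $1/f$ is also continuous and maps every cofinally Bourbaki quasi-Cauchy sequence in $X$ to a cofinally Bourbaki-Cauchy sequence in $\mathbb{R}$.
   Context: For $\varepsilon>0$, an $\varepsilon$-chain joining $x,y$ is a finite sequence $x=x_0,\dots,x_n=y$ with $d(x_{i-1},x_i)<\varepsilon$. A sequence $\langle x_n\rangle$ in $X$ is cofinally Bourbaki quasi-Cauchy if for every $\varepsilon>0$ there is an infinite $N_\varepsilon\subseteq\mathbb{N}$ such that any $x_j,x_k$ with $j,k\in N_\varepsilon$ can be joined by an $\varepsilon$-chain; $X$ is cofinally Bourbaki quasi-complete if every such sequence has a cluster point. In a metric space $\langle Y,\rho\rangle$, let $S^1_\rho(p,\varepsilon)$ be the open ball of radius $\varepsilon$ about $p$ and $S^{m}_\rho(p,\varepsilon)=\{y: \rho(y,S^{m-1}_\rho(p,\varepsilon))<\varepsilon\}$. A sequence $\langle y_n\rangle$ in $Y$ is cofinally Bourbaki-Cauchy if for every $\varepsilon>0$ there exist an infinite $N_\varepsilon\subseteq\mathbb{N}$, $m\in\mathbb{N}$ and $p\in Y$ with $y_n\in S^m_\rho(p,\varepsilon)$ for all $n\in N_\varepsilon$. *)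

From Stdlib Require Import Reals Lra.
Open Scope R_scope.

Record is_metric {X : Type} (d : X -> X -> R) : Prop := {
  metric_nonneg : forall x y, 0 <= d x y;
  metric_zero : forall x y, d x y = 0 <-> x = y;
  metric_sym : forall x y, d x y = d y x;
  metric_triangle : forall x y z, d x z <= d x y + d y z
}.

Definition infinite_nat (N : nat -> Prop) : Prop :=
  forall m, exists n, (m <= n)%nat /\ N n.

Definition eps_chain {X : Type} (d : X -> X -> R) (eps : R) (x y : X) : Prop :=
  exists (n : nat) (s : nat -> X),
    s 0%nat = x /\ s n = y /\
    forall i, (i < n)%nat -> d (s i) (s (S i)) < eps.

Definition cofinally_Bourbaki_quasi_Cauchy {X : Type} (d : X -> X -> R)
    (x : nat -> X) : Prop :=
  forall eps, 0 < eps ->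
    exists N : nat -> Prop, infinite_nat N /\
      forall j k, N j -> N k -> eps_chain d eps (x j) (x k).

Definition cluster_point {X : Type} (d : X -> X -> R) (x : nat -> X) (p : X) : Prop :=
  forall eps, 0 < eps -> forall m, exists n, (m <= n)%nat /\ d (x n) p < eps.

Definition cofinally_Bourbaki_quasi_complete {X : Type} (d : X -> X -> R) : Prop :=
  forall x : nat -> X, cofinally_Bourbaki_quasi_Cauchy d x ->
    exists p, cluster_point d x p.

(* Iterated enlargements: S_iter rho p eps m  is  S^{m+1}_rho(p,eps).
   S^1 = open ball; S^{m+1} = { y | rho(y, S^m) < eps }, and
   rho(y,A) = inf_{a in A} rho(y,a) < eps  iff  exists a in A, rho(y,a) < eps. *)
Fixpoint S_iter {Y : Type} (rho : Y -> Y -> R) (p : Y) (eps : R) (m : nat) : Y -> Prop :=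
  match m with
  | 0%nat => fun y => rho p y < eps
  | S m' => fun y => exists z, S_iter rho p eps m' z /\ rho y z < eps
  end.

Definition cofinally_Bourbaki_Cauchy {Y : Type} (rho : Y -> Y -> R) (y : nat -> Y) : Prop :=
  forall eps, 0 < eps ->
    exists (N : nat -> Prop) (m : nat) (p : Y), infinite_nat N /\
      forall n, N n -> S_iter rho p eps m (y n).

Definition R_dist (a b : R) : R := Rabs (a - b).

Definition metric_continuous {X : Type} (d : X -> X -> R) (f : X -> R) : Prop :=
  forall x eps, 0 < eps -> exists delta, 0 < delta /\
    forall y, d x y < delta -> Rabs (f y - f x) < eps.

Definition preserves_cBqC_to_cBC {X : Type} (d : X -> X -> R) (f : X -> R) : Prop :=
  forall x : nat -> X, cofinally_Bourbaki_quasi_Cauchy d x ->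
    cofinally_Bourbaki_Cauchy R_dist (fun n => f (x n)).

(** (1) => (2): a cluster point [p] of a cofinally Bourbaki quasi-Cauchy sequence
    keeps [f] away from [0] near [p], so [1/f] is bounded along infinitely many
    terms; and in [R] the enlargements [S^m(p, eps)] are just balls of radius
    [m * eps], so being cofinally Bourbaki-Cauchy means being bounded on an
    infinite set of indices.

    (2) => (1): if [x] is cofinally Bourbaki quasi-Cauchy without cluster point,
    [g y = min (1, inf_n (d(y, x_n) + 1/(n+1)))] is 1-Lipschitz, positive and
    bounded, so it satisfies the hypotheses of (2); but [1/g(x_n) >= n + 1], so
    [1/g] is not bounded on any infinite set of indices. *)

From Stdlib Require Import Reals Lra Lia Classical.
Open Scope R_scope.

Definition cofinally_bounded (y : nat -> R) : Prop :=
  exists (N : nat -> Prop) (B : R), infinite_nat N /\ forall n, N n -> Rabs (y n) <= B.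

Lemma S_iter_R_dist (p eps : R) (m : nat) (y : R) : 0 < eps ->
  S_iter R_dist p eps m y <-> Rabs (p - y) < (INR m + 1) * eps.
Proof.
  intros Heps; revert y; induction m as [|m IH]; intros y; simpl S_iter; unfold R_dist.
  - replace ((INR 0 + 1) * eps) with eps by (simpl; ring); reflexivity.
  - rewrite S_INR; set (k := INR m + 1).
    assert (Hk : 1 <= k) by (pose proof (pos_INR m); unfold k; lra).
    split.
    + intros [z [Hz Hyz]]; apply IH in Hz.
      pose proof (Rabs_triang (p - z) (z - y)) as Htri.
      replace (p - z + (z - y)) with (p - y) in Htri by ring.
      rewrite Rabs_minus_sym in Hyz; unfold k in *; lra.
    + intros Hpy.
      (* the point dividing [[y, p]] in ratio [1 : k] *)
      exists (y + (p - y) / (k + 1)); split.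
      * apply IH.
        replace (p - (y + (p - y) / (k + 1))) with ((p - y) * (k / (k + 1)))
          by (field; lra).
        rewrite Rabs_mult, (Rabs_pos_eq (k / (k + 1)))
          by (apply Rlt_le, Rdiv_lt_0_compat; lra).
        apply (Rmult_lt_reg_r (k + 1)); [lra|].
        replace (Rabs (p - y) * (k / (k + 1)) * (k + 1)) with (Rabs (p - y) * k)
          by (field; lra).
        unfold k in *; nra.
      * replace (y - (y + (p - y) / (k + 1))) with ((y - p) * / (k + 1)) by (field; lra).
        rewrite Rabs_mult, Rabs_inv, (Rabs_pos_eq (k + 1)), Rabs_minus_sym by lra.
        apply (Rmult_lt_reg_r (k + 1)); [lra|].
        rewrite Rmult_assoc, Rinv_l by lra; unfold k in *; lra.
Qed.

Lemma cofinally_Bourbaki_Cauchy_R_iff (y : nat -> R) :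
  cofinally_Bourbaki_Cauchy R_dist y <-> cofinally_bounded y.
Proof.
  split.
  - intros Hy; destruct (Hy 1 Rlt_0_1) as [N [m [p [HN Hball]]]].
    exists N, (Rabs p + (INR m + 1)); split; [exact HN|].
    intros n Hn; specialize (Hball n Hn); apply S_iter_R_dist in Hball; [|lra].
    pose proof (Rabs_triang p (y n - p)) as Htri.
    replace (p + (y n - p)) with (y n) in Htri by ring.
    rewrite Rabs_minus_sym in Htri; lra.
  - intros [N [B [HN HB]]] eps Heps.
    destruct (INR_archimed eps B Heps) as [m Hm].
    exists N, m, 0; split; [exact HN|].
    intros n Hn; apply S_iter_R_dist; [exact Heps|].
    rewrite Rminus_0_l, Rabs_Ropp; specialize (HB n Hn); lra.
Qed.

Lemma not_cofinally_bounded_of_ge_INR (y : nat -> R) :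
  (forall n, INR n <= Rabs (y n)) -> ~ cofinally_bounded y.
Proof.
  intros Hy [N [B [HN HB]]].
  destruct (INR_unbounded B) as [k Hk].
  destruct (HN k) as [n [Hkn Hn]].
  pose proof (le_INR _ _ Hkn); specialize (Hy n); specialize (HB n Hn); lra.
Qed.

Lemma bounded_preserves_cBqC_to_cBC (X : Type) (d : X -> X -> R) (f : X -> R) (B : R) :
  (forall y, Rabs (f y) <= B) -> preserves_cBqC_to_cBC d f.
Proof.
  intros Hf z _; apply cofinally_Bourbaki_Cauchy_R_iff.
  exists (fun _ => True), B; split; [|auto].
  intros m; exists m; auto.
Qed.

Lemma Rinv_continuous_at (a : R) : a <> 0 ->
  forall eps, 0 < eps ->
  exists delta, 0 < delta /\ forall b, Rabs (b - a) < delta -> Rabs (/ b - / a) < eps.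
Proof.
  intros Ha eps Heps.
  destruct (continuity_pt_inv id a (derivable_continuous_pt _ _ (derivable_pt_id a)) Ha eps Heps)
    as [delta [Hdelta Hclose]].
  exists delta; split; [exact Hdelta|].
  intros b Hb; destruct (Req_dec b a) as [->|Hba].
  - rewrite Rminus_diag, Rabs_R0; exact Heps.
  - exact (Hclose b (conj (conj I (not_eq_sym Hba)) Hb)).
Qed.

Lemma metric_continuous_inv (X : Type) (d : X -> X -> R) (f : X -> R) :
  metric_continuous d f -> (forall x, f x <> 0) ->
  metric_continuous d (fun x => / f x).
Proof.
  intros Hf Hnz x eps Heps.
  destruct (Rinv_continuous_at (f x) (Hnz x) eps Heps) as [eta [Heta Hinv]].
  destruct (Hf x eta Heta) as [delta [Hdelta Hclose]].
  exists delta; split; [exact Hdelta|].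
  intros y Hy; exact (Hinv (f y) (Hclose y Hy)).
Qed.

Lemma metric_continuous_inv_bounded_near (X : Type) (d : X -> X -> R) (f : X -> R)
    (p : X) :
  metric_continuous d f -> f p <> 0 ->
  exists delta, 0 < delta /\
    forall y, d p y < delta -> Rabs (/ f y) <= 2 / Rabs (f p).
Proof.
  intros Hf Hp.
  assert (Hpos : 0 < Rabs (f p)) by (apply Rabs_pos_lt; exact Hp).
  destruct (Hf p (Rabs (f p) / 2)) as [delta [Hdelta Hclose]]; [lra|].
  exists delta; split; [exact Hdelta|].
  intros y Hy; specialize (Hclose y Hy).
  assert (Hfy : Rabs (f p) / 2 <= Rabs (f y)).
  { pose proof (Rabs_triang_inv (f p) (f p - f y)) as Htri.
    replace (f p - (f p - f y)) with (f y) in Htri by ring.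
    rewrite Rabs_minus_sym in Hclose; lra. }
  rewrite Rabs_inv.
  replace (2 / Rabs (f p)) with (/ (Rabs (f p) / 2)) by (field; lra).
  apply Rinv_le_contravar; lra.
Qed.

Lemma cluster_point_inv_cofinally_bounded (X : Type) (d : X -> X -> R)
    (f : X -> R) (x : nat -> X) (p : X) :
  is_metric d -> metric_continuous d f -> f p <> 0 -> cluster_point d x p ->
  cofinally_bounded (fun n => / f (x n)).
Proof.
  intros Hd Hf Hp Hcl.
  destruct (metric_continuous_inv_bounded_near X d f p Hf Hp)
    as [delta [Hdelta Hbound]].
  exists (fun n => d p (x n) < delta), (2 / Rabs (f p)); split.
  - intros m; destruct (Hcl delta Hdelta m) as [n [Hmn Hn]].
    rewrite (metric_sym d Hd) in Hn; eauto.
  - intros n Hn; exact (Hbound (x n) Hn).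
Qed.

Lemma not_cluster_point_far (X : Type) (d : X -> X -> R) (x : nat -> X) (p : X) :
  ~ cluster_point d x p ->
  exists eps m, 0 < eps /\ forall n, (m <= n)%nat -> eps <= d (x n) p.
Proof.
  intros Hp; apply NNPP; intros Hnear; apply Hp.
  intros eps Heps m; apply NNPP; intros Hfar; apply Hnear.
  exists eps, m; split; [exact Heps|].
  intros n Hmn; apply Rnot_lt_le; intros Hn; apply Hfar; eauto.
Qed.

Lemma Lipschitz_metric_continuous (X : Type) (d : X -> X -> R) (f : X -> R) :
  is_metric d -> (forall y z, f z <= f y + d y z) -> metric_continuous d f.
Proof.
  intros Hd Hf y eps Heps; exists eps; split; [exact Heps|].
  intros z Hz; pose proof (Hf y z); pose proof (Hf z y).
  rewrite (metric_sym d Hd z y) in *.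
  apply Rabs_def1; lra.
Qed.

Section TailGauge.

Variables (X : Type) (d : X -> X -> R) (x : nat -> X).
Hypothesis Hd : is_metric d.

Definition gauge_term (y : X) (n : nat) : R := d y (x n) + / (INR n + 1).

(* [completeness] only provides suprema, so the infimum of [1] and the
   [gauge_term y n] is taken as minus the supremum of their opposites. *)
Definition opp_gauge_set (y : X) (t : R) : Prop :=
  t = -1 \/ exists n, t = - gauge_term y n.

Lemma opp_gauge_set_bound (y : X) : bound (opp_gauge_set y).
Proof.
  exists 0; intros t [->|[n ->]]; [lra|].
  unfold gauge_term; pose proof (metric_nonneg d Hd y (x n)).
  pose proof (RinvN_pos n); lra.
Qed.

Lemma opp_gauge_set_inhabited (y : X) : exists t, opp_gauge_set y t.
Proof. exists (-1); left; reflexivity. Qed.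

Definition tail_gauge (y : X) : R :=
  - proj1_sig (completeness _ (opp_gauge_set_bound y) (opp_gauge_set_inhabited y)).

Lemma tail_gauge_lub (y : X) : is_lub (opp_gauge_set y) (- tail_gauge y).
Proof. unfold tail_gauge; rewrite Ropp_involutive; exact (proj2_sig _). Qed.

Lemma tail_gauge_le_1 (y : X) : tail_gauge y <= 1.
Proof.
  assert (H : -1 <= - tail_gauge y) by (apply tail_gauge_lub; left; reflexivity).
  lra.
Qed.

Lemma tail_gauge_le_term (y : X) (n : nat) : tail_gauge y <= gauge_term y n.
Proof.
  assert (H : - gauge_term y n <= - tail_gauge y)
    by (apply tail_gauge_lub; right; exists n; reflexivity).
  lra.
Qed.

Lemma tail_gauge_ge (y : X) (c : R) :
  c <= 1 -> (forall n, c <= gauge_term y n) -> c <= tail_gauge y.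
Proof.
  intros H1 Hterm.
  assert (H : - tail_gauge y <= - c).
  { apply tail_gauge_lub; intros t [->|[n ->]]; [lra|].
    specialize (Hterm n); lra. }
  lra.
Qed.

Lemma tail_gauge_nonneg (y : X) : 0 <= tail_gauge y.
Proof.
  apply tail_gauge_ge; [lra|]; intros n; unfold gauge_term.
  pose proof (metric_nonneg d Hd y (x n)); pose proof (RinvN_pos n); lra.
Qed.

Lemma tail_gauge_Lipschitz (y z : X) : tail_gauge y <= tail_gauge z + d y z.
Proof.
  enough (H : tail_gauge y - d y z <= tail_gauge z) by lra.
  pose proof (metric_nonneg d Hd y z).
  apply tail_gauge_ge.
  - pose proof (tail_gauge_le_1 y); lra.
  - intros n; pose proof (tail_gauge_le_term y n).
    pose proof (metric_triangle d Hd y z (x n)).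
    unfold gauge_term in *; lra.
Qed.

Lemma tail_gauge_continuous : metric_continuous d tail_gauge.
Proof.
  apply Lipschitz_metric_continuous; [exact Hd|].
  intros y z; rewrite (metric_sym d Hd y z); apply tail_gauge_Lipschitz.
Qed.

Lemma tail_gauge_pos (y : X) : ~ cluster_point d x y -> 0 < tail_gauge y.
Proof.
  intros Hy; destruct (not_cluster_point_far X d x y Hy) as [eps [m [Heps Hfar]]].
  assert (Hm : 0 < / (INR m + 1)) by apply RinvN_pos.
  apply Rlt_le_trans with (Rmin 1 (Rmin eps (/ (INR m + 1)))).
  { apply Rmin_glb_lt; [lra|]; apply Rmin_glb_lt; assumption. }
  pose proof (Rmin_l 1 (Rmin eps (/ (INR m + 1)))).
  pose proof (Rmin_r 1 (Rmin eps (/ (INR m + 1)))).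
  pose proof (Rmin_l eps (/ (INR m + 1))); pose proof (Rmin_r eps (/ (INR m + 1))).
  apply tail_gauge_ge; [lra|]; intros n; unfold gauge_term.
  pose proof (RinvN_pos n); pose proof (metric_nonneg d Hd y (x n)).
  destruct (Nat.le_gt_cases m n) as [Hmn|Hnm].
  - specialize (Hfar n Hmn); rewrite (metric_sym d Hd) in Hfar; lra.
  - assert (/ (INR m + 1) <= / (INR n + 1)).
    { apply Rinv_le_contravar; [pose proof (pos_INR n); lra|].
      apply Rplus_le_compat_r, le_INR; lia. }
    lra.
Qed.

Lemma tail_gauge_at_term (n : nat) : tail_gauge (x n) <= / (INR n + 1).
Proof.
  pose proof (tail_gauge_le_term (x n) n); unfold gauge_term in *.
  rewrite (proj2 (metric_zero d Hd (x n) (x n)) eq_refl) in *; lra.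
Qed.

Lemma inv_tail_gauge_not_cofinally_bounded :
  (forall y, 0 < tail_gauge y) -> ~ cofinally_bounded (fun n => / tail_gauge (x n)).
Proof.
  intros Hpos; apply not_cofinally_bounded_of_ge_INR; intros n; cbv beta.
  pose proof (Hpos (x n)) as Hg; pose proof (tail_gauge_at_term n) as Hterm.
  assert (Hinv : INR n + 1 <= / tail_gauge (x n)).
  { rewrite <- (Rinv_inv (INR n + 1)); apply Rinv_le_contravar; assumption. }
  rewrite Rabs_pos_eq by (apply Rlt_le, Rinv_0_lt_compat, Hg); lra.
Qed.

End TailGauge.

Theorem mainTheorem6 (X : Type) (d : X -> X -> R) (Hd : is_metric d) :
  cofinally_Bourbaki_quasi_complete d <->
  (forall f : X -> R,
     metric_continuous d f ->
     (forall x, f x <> 0) ->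
     preserves_cBqC_to_cBC d f ->
     metric_continuous d (fun x => / f x) /\
     preserves_cBqC_to_cBC d (fun x => / f x)).
Proof.
  split.
  - intros Hcomplete f Hf Hnz _; split; [exact (metric_continuous_inv X d f Hf Hnz)|].
    intros z Hz; destruct (Hcomplete z Hz) as [p Hp].
    apply cofinally_Bourbaki_Cauchy_R_iff.
    exact (cluster_point_inv_cofinally_bounded X d f z p Hd Hf (Hnz p) Hp).
  - intros Hinv x Hx; apply NNPP; intros Hno.
    set (g := tail_gauge X d x Hd).
    assert (Hg : forall y, 0 < g y)
      by (intros y; apply tail_gauge_pos; intros Hy; apply Hno; exists y; exact Hy).
    assert (Hg_bounded : forall y, Rabs (g y) <= 1).
    { intros y; pose proof (tail_gauge_nonneg X d x Hd y).
      pose proof (tail_gauge_le_1 X d x Hd y).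
      unfold g; rewrite Rabs_pos_eq; assumption. }
    destruct (Hinv g (tail_gauge_continuous X d x Hd)
                (fun y => Rgt_not_eq _ _ (Hg y))
                (bounded_preserves_cBqC_to_cBC X d g 1 Hg_bounded)) as [_ Hinv_g].
    apply (inv_tail_gauge_not_cofinally_bounded X d x Hd Hg).
    apply cofinally_Bourbaki_Cauchy_R_iff, Hinv_g, Hx.
Qed.
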